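(* Let $\overline{n}=(n_1,\ldots,n_r)$ with $1\le n_1\le\cdots\le n_r$. Then $\mathrm{cat}(\mathrm{P}_{\overline{n}})<(n_1+1)\,r$.
   Context: $\mathrm{P}_{\overline{n}}$ is the quotient of $S^{n_1}\times\cdots\times S^{n_r}$ by the diagonal $\mathbb{Z}_2$-action which is antipodal on each factor. $\mathrm{cat}$ denotes the reduced Lusternik–Schnirelmann category: one less than the minimal number of open sets covering the space, each contractible in the space (so a contractible space has $\mathrm{cat}=0$). *)

From HB Require Import structures.
From mathcomp Require Import all_boot all_order all_algebra generic_quotient.
From mathcomp Require Import all_classical all_reals all_analysis.
Import numFieldNormedType.Exports.
Unset Printing Implicit Defensive.
Import Order.TTheory GRing.Theory Num.Theory.
Local Open Scope classical_set_scope.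
Local Open Scope ring_scope.
Local Open Scope quotient_scope.

Definition usphere (R : realType) (m : nat) : set 'rV[R]_m.+1 :=
  [set x | \sum_(i < m.+1) (x ord0 i) ^+ 2 = 1].

Definition Sphere (R : realType) (m : nat) : Type :=
  set_type (usphere R m).
HB.instance Definition _ (R : realType) (m : nat) :=
  Topological.copy (Sphere R m) (set_type (usphere R m)).

Lemma usphere_opp (R : realType) (m : nat) (x : 'rV[R]_m.+1) :
  x \in usphere R m -> - x \in usphere R m.
Proof.
rewrite !inE /usphere /= => <-.
by apply: eq_bigr => i _; rewrite mxE sqrrN.
Qed.

Definition sph_antipode (R : realType) (m : nat) (x : Sphere R m) : Sphere R m :=
  exist _ (- val x) (@usphere_opp R m _ (valP x)).

(* S^{n_0} x ... x S^{n_(r-1)} with the product topology. *)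
Definition ProdSpheres (R : realType) (r : nat) (n : nat -> nat) : Type :=
  prod_topology (fun i : 'I_r => Sphere R (n i)).
HB.instance Definition _ (R : realType) (r : nat) (n : nat -> nat) :=
  Topological.copy (ProdSpheres R r n)
    (prod_topology (fun i : 'I_r => Topological.clone (Sphere R (n i)) _)).

Definition diag_antipode (R : realType) r n (x : ProdSpheres R r n) : ProdSpheres R r n :=
  fun i => @sph_antipode R (n i) (x i).

Lemma diag_antipodeK (R : realType) r n : involutive (@diag_antipode R r n).
Proof.
move=> x; apply: functional_extensionality_dep => i.
by apply: val_inj; rewrite /= opprK.
Qed.

Definition antip_rel (R : realType) r n : rel (ProdSpheres R r n) :=
  fun x y => (x == y) || (x == @diag_antipode R r n y).

Lemma antip_rel_equiv (R : realType) r n : equivalence_rel (@antip_rel R r n).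
Proof.
rewrite /antip_rel => x y z; split; first by rewrite eqxx.
set A := @diag_antipode R r n.
have K : forall u, A (A u) = u by exact: diag_antipodeK.
have E u v : (u == A v) = (A u == v).
  by apply/eqP/eqP => [->|<-]; rewrite ?K.
have I u v : (A u == A v) = (u == v).
  by apply/eqP/eqP => [/(congr1 A)|->]; rewrite ?K.
case/orP => /eqP -> //.
by rewrite -E I orbC.
Qed.

Lemma antip_rel_refl (R : realType) r n : reflexive (@antip_rel R r n).
Proof. by move=> x; case: (@antip_rel_equiv R r n x x x). Qed.

Lemma antip_rel_sym (R : realType) r n : symmetric (@antip_rel R r n).
Proof.
move=> x y; apply/idP/idP => h.
  by have [_ /(_ h) <-] := @antip_rel_equiv R r n x y x; exact: (@antip_rel_refl R r n).
by have [_ /(_ h) <-] := @antip_rel_equiv R r n y x y; exact: (@antip_rel_refl R r n).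
Qed.

Lemma antip_rel_trans (R : realType) r n : transitive (@antip_rel R r n).
Proof.
move=> y x z hxy hyz; have [_ /(_ hxy) ->] := @antip_rel_equiv R r n x y z.
exact: hyz.
Qed.

Definition antip_equiv (R : realType) r n :=
  EquivRel (@antip_rel R r n) (@antip_rel_refl R r n)
    (@antip_rel_sym R r n) (@antip_rel_trans R r n).

Definition Pn (R : realType) (r : nat) (n : nat -> nat) : Type :=
  quotient_topology {eq_quot (@antip_equiv R r n)}.
HB.instance Definition _ (R : realType) (r : nat) (n : nat -> nat) :=
  Topological.copy (Pn R r n)
    (quotient_topology {eq_quot (@antip_equiv R r n)}).

Definition contractible_in (R : realType) (Y : topologicalType) (U : set Y) : Prop :=
  exists (H : (Y * R)%type -> Y) (y0 : Y),
    {within U `*` `[0%R, 1%R], continuous H} /\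
    (forall u, U u -> H (u, 0%R) = u) /\
    (forall u, U u -> H (u, 1%R) = y0).

Definition cat_le (R : realType) (Y : topologicalType) (k : nat) : Prop :=
  exists U : 'I_k.+1 -> set Y,
    (forall i, open (U i) /\ contractible_in R Y (U i)) /\
    \bigcup_i U i = setT.

(* reduced LS category:  cat(Y) < m  iff the least such k is < m. *)
Definition cat_lt (R : realType) (Y : topologicalType) (m : nat) : Prop :=
  exists k, (k < m)%N /\ cat_le R Y k.

From HB Require Import structures.
From mathcomp Require Import all_boot all_order all_algebra generic_quotient.
From mathcomp Require Import all_classical all_reals all_analysis.
From mathcomp Require Import ring lra.
Import numFieldNormedType.Exports.
Import Order.TTheory GRing.Theory Num.Theory.
Local Open Scope classical_set_scope.
Local Open Scope ring_scope.
Local Open Scope quotient_scope.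

(* We exhibit (n_1 + 1) r open sets covering P_n, each contractible in P_n.
   For a coordinate j of the first sphere and a point q of the product, let
   U(j, q) consist of the classes [x] with x_1[j] <> 0 and, once the
   representative is fixed by x_1[j] > 0, x_i <> -q_i for all i.  On U(j, q)
   the straight-line homotopy from x to q, normalised factor by factor, never
   passes through 0, so it descends to a contraction of U(j, q) in P_n.
   Taking q_1 = e_j and, for i >= 2, q_i a unit vector with first coordinate
   k / r (0 <= k < r), the sets U(j, q) cover: if every one of the r values
   of k were blocked, each would be blocked by a different factor among the
   r - 1 factors x_2, ..., x_r, which is impossible. *)

Lemma cvg_initial (S : choiceType) (T : topologicalType) (f : S -> T)
    (Z : Type) (F : set_system Z) (FF : Filter F) (g : Z -> initial_topology f) (s : S) :
  (f \o g) @ F --> f s -> g @ F --> (s : initial_topology f).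
Proof.
move=> fg_s A; rewrite nbhsE => -[B [[C oC <-] Bs] BA].
have FC : F ((f \o g) @^-1` C) by apply: fg_s; apply: open_nbhs_nbhs.
by apply: (@filterS _ F _ _ _ _ FC) => z Cz; exact: BA.
Qed.

Lemma cvg_prod_topology (I : Type) (K : I -> topologicalType)
    (Z : Type) (F : set_system Z) (FF : Filter F)
    (g : Z -> prod_topology K) (s : prod_topology K) :
  (forall i, (fun z => g z i) @ F --> s i) -> g @ F --> s.
Proof.
move=> gs; apply/(@cvg_sup (prod_topology K)) => i.
exact: (@cvg_initial _ _ (fun x : prod_topology K => x i) _ F FF g s (gs i)).
Qed.

Section Spheres.
Variable R : realType.

Lemma cvg_sphere m (Z : Type) (F : set_system Z) (FF : Filter F)
    (g : Z -> Sphere R m) (s : Sphere R m) :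
  (fun z => val (g z)) @ F --> val s -> g @ F --> s.
Proof. exact: cvg_initial. Qed.

Lemma sphere_val_continuous m : continuous (fun x : Sphere R m => val x).
Proof. exact: initial_continuous. Qed.

Lemma cvg_prod_spheres r n (Z : Type) (F : set_system Z) (FF : Filter F)
    (g : Z -> ProdSpheres R r n) (s : ProdSpheres R r n) :
  (forall i, (fun z => g z i) @ F --> s i) -> g @ F --> s.
Proof. exact: cvg_prod_topology. Qed.

Lemma prod_spheres_coord_continuous r n (i : 'I_r) :
  continuous (fun x : ProdSpheres R r n => val (x i)).
Proof.
move=> x; apply: (@continuous_comp _ _ _ (fun y : ProdSpheres R r n => y i)).
  exact: (@proj_continuous _ (fun i : 'I_r => Sphere R (n i))).
exact: sphere_val_continuous.
Qed.

End Spheres.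

Lemma cvg_sum (R : numFieldType) (I : Type) (s : seq I) (Z : Type) (F : set_system Z)
    (FF : Filter F) (f : I -> Z -> R) (a : I -> R) :
  (forall i, f i @ F --> a i) -> (fun z => \sum_(i <- s) f i z) @ F --> \sum_(i <- s) a i.
Proof.
move=> fa; elim: s => [|x s IH].
  by rewrite big_nil; under eq_fun do rewrite big_nil; exact: cvg_cst.
by rewrite big_cons; under eq_fun do rewrite big_cons; exact: cvgD.
Qed.

Section SquaredNorm.
Context {R : realType} {m : nat}.
Implicit Types (v w : 'rV[R]_m.+1).

Definition sqnorm v : R := \sum_(l < m.+1) v ord0 l ^+ 2.

Lemma sqr_coord_le_sqnorm v l : v ord0 l ^+ 2 <= sqnorm v.
Proof. by rewrite /sqnorm (bigD1 l) //= lerDl; apply: sumr_ge0 => k _; exact: sqr_ge0. Qed.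

Lemma sqnorm_gt0 v l : v ord0 l != 0 -> 0 < sqnorm v.
Proof.
move=> vl_neq0; apply: lt_le_trans (sqr_coord_le_sqnorm v l).
by rewrite exprn_even_gt0 ?vl_neq0 ?orbT.
Qed.

Lemma sqnormZ (c : R) v : sqnorm (c *: v) = c ^+ 2 * sqnorm v.
Proof. by rewrite /sqnorm mulr_sumr; apply: eq_bigr => l _; rewrite mxE exprMn. Qed.

Lemma usphereE v : usphere R m v = (sqnorm v = 1).
Proof. by []. Qed.

Lemma sqnorm_continuous : continuous sqnorm.
Proof.
move=> v; apply: (@cvg_sum R _ _ _ (nbhs v) _ (fun l w => w ord0 l ^+ 2)) => l.
by rewrite expr2; apply: cvgM; exact: coord_continuous.
Qed.

Definition normalize v : 'rV[R]_m.+1 := (Num.sqrt (sqnorm v))^-1 *: v.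

Lemma normalize_usphere v : 0 < sqnorm v -> usphere R m (normalize v).
Proof.
move=> v_gt0; rewrite usphereE sqnormZ exprVn sqr_sqrtr ?ltW //.
by rewrite mulVf // gt_eqF.
Qed.

Lemma normalize_id v : usphere R m v -> normalize v = v.
Proof. by rewrite usphereE /normalize => ->; rewrite sqrtr1 invr1 scale1r. Qed.

Lemma normalize_continuous {v} : 0 < sqnorm v -> {for v, continuous normalize}.
Proof.
move=> v_gt0.
have inv_cont : {for v, continuous (fun w => (Num.sqrt (sqnorm w))^-1)}.
  apply: (@continuousV _ _ (fun w => Num.sqrt (sqnorm w))).
    by rewrite sqrtr_eq0 -ltNge.
  exact: continuous_comp (sqnorm_continuous v) (@sqrt_continuous R _).
exact: (@cvgZ R _ _ (nbhs v) _ _ id _ _ inv_cont cvg_id).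
Qed.

(* On the unit sphere, the chord from x to q has squared length
   (1 - 2t)^2 + t (1 - t) |x + q|^2, which vanishes only when q = -x. *)
Lemma sqnorm_lerp (x q : 'rV[R]_m.+1) (t : R) : sqnorm x = 1 -> sqnorm q = 1 ->
  sqnorm ((1 - t) *: x + t *: q) = (1 - 2 * t) ^+ 2 + t * (1 - t) * sqnorm (x + q).
Proof.
move=> x1 q1.
have coordE l : (((1 - t) *: x + t *: q) ord0 l) ^+ 2 =
    (1 - t) ^+ 2 * x ord0 l ^+ 2 + t ^+ 2 * q ord0 l ^+ 2 +
    t * (1 - t) * ((x + q) ord0 l ^+ 2 - x ord0 l ^+ 2 - q ord0 l ^+ 2).
  by rewrite !mxE; ring.
rewrite /sqnorm (eq_bigr _ (fun l _ => coordE l)) !big_split /= -!mulr_sumr !sumrB.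
by rewrite -!/(sqnorm _) x1 q1; ring.
Qed.

Lemma sqnorm_lerp_gt0 (x q : 'rV[R]_m.+1) (t : R) :
  sqnorm x = 1 -> sqnorm q = 1 -> 0 < sqnorm (x + q) -> 0 <= t <= 1 ->
  0 < sqnorm ((1 - t) *: x + t *: q).
Proof.
move=> x1 q1 xq_gt0 /andP[t_ge0 t_le1]; rewrite sqnorm_lerp //.
have [->|t_neq0] := eqVneq t 0; first by rewrite mulr0 subr0 expr1n !mul0r addr0.
have [->|t_neq1] := eqVneq t 1; first by rewrite subrr mulr0 mul0r addr0; lra.
rewrite ltr_pwDr ?sqr_ge0 // !mulr_gt0 //; first by rewrite lt_def t_neq0.
by rewrite subr_gt0 lt_def eq_sym t_neq1.
Qed.

End SquaredNorm.

Section SpherePoints.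
Context {R : realType} {m : nat}.

Lemma sqnorm_sphere (x : Sphere R m) : sqnorm (val x) = 1.
Proof. by have := valP x; rewrite in_setE. Qed.

(* [q] is a junk default, irrelevant whenever [v] is nonzero. *)
Definition sphere_of (q : Sphere R m) (v : 'rV[R]_m.+1) : Sphere R m :=
  insubd q (normalize v).

Lemma sphere_ofE q v : 0 < sqnorm v -> val (sphere_of q v) = normalize v.
Proof. by move=> /normalize_usphere; rewrite -in_setE val_insubd => ->. Qed.

Lemma sphere_of_id q (x : Sphere R m) : sphere_of q (val x) = x.
Proof.
apply: val_inj; rewrite sphere_ofE ?sqnorm_sphere ?ltr01 // normalize_id //.
by rewrite usphereE sqnorm_sphere.
Qed.

Lemma sphere_of_continuous q (Z : topologicalType) (w : Z -> 'rV[R]_m.+1) (z : Z) :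
  {for z, continuous w} -> 0 < sqnorm (w z) ->
  {for z, continuous (fun y => sphere_of q (w y))}.
Proof.
move=> w_cont wz_gt0; apply: cvg_sphere; rewrite sphere_ofE //.
have sqnorm_near : \forall y \near z, 0 < sqnorm (w y).
  have gt0_nbhs : nbhs (sqnorm (w z)) [set y : R | 0 < y].
    by apply: open_nbhs_nbhs; split => //; exact: open_gt.
  have sqnorm_w_cont : {for z, continuous (sqnorm \o w)}.
    exact: continuous_comp w_cont (sqnorm_continuous (w z)).
  exact: sqnorm_w_cont _ gt0_nbhs.
have normalize_eq :
    {near z, (fun y => normalize (w y)) =1 (fun y => val (sphere_of q (w y)))}.
  by apply: filterS sqnorm_near => y wy; rewrite /= sphere_ofE.
apply: cvg_trans; first exact: near_eq_cvg normalize_eq.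
exact: continuous_comp w_cont (normalize_continuous wz_gt0).
Qed.

End SpherePoints.

Lemma open_gt0_preimage (R : realType) (T : topologicalType) (f : T -> R) :
  continuous f -> open [set x | 0 < f x].
Proof. by move=> f_cont; exact: (proj1 (continuousP _) f_cont _ (@open_gt R 0)). Qed.

Section Homotopy.
Context {R : realType} {r : nat} {n : nat -> nat}.
Local Notation PS := (ProdSpheres R r n).

Definition toward (q : PS) (p : PS * R) : PS :=
  fun i => sphere_of (q i) ((1 - p.2) *: val (p.1 i) + p.2 *: val (q i)).

Definition avoids_antipode (q x : PS) : Prop :=
  forall i, 0 < sqnorm (val (x i) + val (q i)).

Lemma toward0 q x : toward q (x, 0) = x.
Proof.
apply: functional_extensionality_dep => i.
by rewrite /toward /= subr0 scale1r scale0r addr0 sphere_of_id.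
Qed.

Lemma toward1 q x : toward q (x, 1) = q.
Proof.
apply: functional_extensionality_dep => i.
by rewrite /toward /= subrr scale0r add0r scale1r sphere_of_id.
Qed.

Lemma toward_continuous {q x t} : avoids_antipode q x -> 0 <= t <= 1 ->
  {for (x, t), continuous (toward q)}.
Proof.
move=> qx t01; apply: (@cvg_prod_spheres _ _ _ _ (nbhs (x, t)) _ (toward q)) => i.
apply: (@sphere_of_continuous _ _ (q i) _
  (fun p : PS * R => (1 - p.2) *: val (p.1 i) + p.2 *: val (q i)) (x, t)); last first.
  by apply: sqnorm_lerp_gt0; rewrite ?sqnorm_sphere.
have snd_cont : {for (x, t), continuous (fun p : PS * R => p.2)} by exact: cvg_snd.
have fst_cont : {for (x, t), continuous (fun p : PS * R => val (p.1 i))}.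
  apply: (@continuous_comp _ _ _ (fun p : PS * R => p.1) (fun y : PS => val (y i))).
    exact: cvg_fst.
  exact: prod_spheres_coord_continuous.
by apply: cvgD; apply: cvgZ => //; [apply: cvgB => //|]; exact: cvg_cst.
Qed.

Lemma avoids_antipode_open q : open [set x | avoids_antipode q x].
Proof.
rewrite openE => x qx.
suff : \forall y \near x, forall i, 0 < sqnorm (val (y i) + val (q i)) by [].
apply: (@filter_forall PS 'I_r (fun i y => 0 < sqnorm (val (y i) + val (q i))) (nbhs x) _).
move=> i.
apply: open_nbhs_nbhs; split; last exact: qx.
apply: (@open_gt0_preimage _ _ (fun y : PS => sqnorm (val (y i) + val (q i)))) => y.
apply: (@continuous_comp _ _ _ (fun z : PS => val (z i) + val (q i)) sqnorm); last first.
  exact: sqnorm_continuous.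
apply: (@cvgD _ _ _ (nbhs y) _ (fun z : PS => val (z i)) (fun=> val (q i))).
  exact: prod_spheres_coord_continuous.
exact: cvg_cst.
Qed.

End Homotopy.

Section Quotient.
Context {R : realType} {r : nat} {n : nat -> nat}.
Local Notation PS := (ProdSpheres R r n).
Local Notation antipode := (@diag_antipode R r n).
Local Notation pi := (\pi_(Pn R r n) : PS -> Pn R r n).

Lemma diag_antipode_continuous : continuous antipode.
Proof.
move=> x; apply: (@cvg_prod_spheres _ _ _ _ (nbhs x) _ antipode) => i.
apply: (@cvg_sphere _ _ _ (nbhs x) _ (fun z : PS => antipode z i)).
by apply: cvgN; exact: prod_spheres_coord_continuous.
Qed.

Lemma pi_diag_antipode x : pi (antipode x) = pi x.
Proof. by apply/(@eqmodP _ (antip_equiv R r n)); rewrite /= /antip_rel eqxx orbT. Qed.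

Lemma pi_eq_orbit {x y} : pi x = pi y -> x = y \/ x = antipode y.
Proof. by move/(@eqmodP _ (antip_equiv R r n)) => /orP[] /eqP ->; [left|right]. Qed.

Lemma pi_preimage_image (V : set PS) : pi @^-1` (pi @` V) = V `|` antipode @^-1` V.
Proof.
apply/seteqP; split => x /=.
  by case=> v Vv /esym /pi_eq_orbit [->|->]; [left|right; rewrite diag_antipodeK].
by case=> Vx; [exists x|exists (antipode x); rewrite ?pi_diag_antipode].
Qed.

Lemma pi_open_image (V : set PS) : open V -> open (pi @` V).
Proof.
move=> oV; suff : open (pi @^-1` (pi @` V)) by [].
rewrite pi_preimage_image; apply: openU => //.
exact: (proj1 (continuousP _) diag_antipode_continuous).
Qed.

End Quotient.

Section Charts.
Context {R : realType} {r : nat} {n : nat -> nat}.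
Variable r_gt0 : (0 < r)%N.
Local Notation PS := (ProdSpheres R r n).
Local Notation antipode := (@diag_antipode R r n).
Local Notation pi := (\pi_(Pn R r n) : PS -> Pn R r n).
Implicit Types (j : 'I_(n 0%N).+1) (x q : PS) (y : Pn R r n).

Definition head_coord j x : R := val (x (Ordinal r_gt0)) ord0 j.

Lemma head_coord_antipode j x : head_coord j (antipode x) = - head_coord j x.
Proof. by rewrite /head_coord /= mxE. Qed.

Lemma head_coord_continuous j : continuous (head_coord j).
Proof.
move=> x; apply: (@continuous_comp _ _ _ (fun y : PS => val (y (Ordinal r_gt0)))
  (fun v : 'rV[R]_(n 0%N).+1 => v ord0 j)).
  exact: prod_spheres_coord_continuous.
exact: coord_continuous.
Qed.

(* A continuous section of [pi] wherever the [j]-th head coordinate does not vanish. *)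
Definition pos_repr j y : PS :=
  if 0 < head_coord j (repr y) then repr y else antipode (repr y).

Lemma pi_pos_repr j y : pi (pos_repr j y) = y.
Proof. by rewrite /pos_repr; case: ifP => _; rewrite ?pi_diag_antipode reprK. Qed.

Lemma pos_repr_pi j x : 0 < head_coord j x -> pos_repr j (pi x) = x.
Proof.
move=> x_gt0; rewrite /pos_repr.
have [->|->] := pi_eq_orbit (reprK (pi x)); first by rewrite x_gt0.
by rewrite head_coord_antipode diag_antipodeK oppr_gt0 ltNge (ltW x_gt0).
Qed.

Lemma pos_repr_gt0 {j y} :
  head_coord j (repr y) != 0 -> 0 < head_coord j (pos_repr j y).
Proof.
rewrite /pos_repr; case: ifP => // /negbT.
rewrite head_coord_antipode -leNgt => y_le0 y_neq0.
by rewrite oppr_gt0 lt_neqAle y_neq0.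
Qed.

Lemma pos_repr_continuous {j y} : 0 < head_coord j (pos_repr j y) ->
  {for y, continuous (pos_repr j)}.
Proof.
move=> y_gt0 W; rewrite nbhsE => -[B [oB By] BW].
pose V := B `&` [set x | 0 < head_coord j x].
have V_open : open V.
  by apply: openI => //; exact: open_gt0_preimage (head_coord_continuous j).
have piV_nbhs : nbhs y (pi @` V).
  apply: open_nbhs_nbhs; split; first exact: pi_open_image.
  by exists (pos_repr j y); [split|rewrite pi_pos_repr].
by apply: filterS piV_nbhs => _ [x [Bx x_gt0] <-]; rewrite /= pos_repr_pi //; exact: BW.
Qed.

Definition lifted_chart j q : set PS := [set x | 0 < head_coord j x /\ avoids_antipode q x].

Definition chart j q : set (Pn R r n) := pos_repr j @^-1` lifted_chart j q.

Lemma lifted_chart_open j q : open (lifted_chart j q).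
Proof.
apply: openI; last exact: avoids_antipode_open.
exact: open_gt0_preimage (head_coord_continuous j).
Qed.

Lemma pi_preimage_chart j q :
  pi @^-1` chart j q = lifted_chart j q `|` antipode @^-1` lifted_chart j q.
Proof.
apply/seteqP; split => x /=.
  by rewrite /chart /=; have [->|->] := pi_eq_orbit (pi_pos_repr j (pi x)); [left|right].
rewrite /chart /=; case=> -[x_gt0 qx]; first by rewrite pos_repr_pi.
by rewrite -pi_diag_antipode pos_repr_pi.
Qed.

Lemma chart_open j q : open (chart j q).
Proof.
suff : open (pi @^-1` chart j q) by [].
rewrite pi_preimage_chart; apply: openU; first exact: lifted_chart_open.
exact: (proj1 (continuousP _) diag_antipode_continuous _ (lifted_chart_open j q)).
Qed.

Lemma chart_contractible j q : contractible_in R (Pn R r n) (chart j q).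
Proof.
exists (fun p : Pn R r n * R => pi (toward q (pos_repr j p.1, p.2))), (pi q).
split; last split; last by move=> y _ /=; rewrite toward1.
- apply: continuous_in_subspaceT => -[y t]; rewrite inE => -[[y_gt0 qy] /= t01].
  have lift_cont :
      {for (y, t), continuous (fun p : Pn R r n * R => (pos_repr j p.1, p.2))}.
    apply: (@cvg_pair _ _ _ (nbhs (y, t)) (nbhs (pos_repr j y)) (nbhs t) _ _ _
      (fun p : Pn R r n * R => pos_repr j p.1) (fun p : Pn R r n * R => p.2)).
      have fst_cont : {for (y, t), continuous (fun p : Pn R r n * R => p.1)}.
        exact: cvg_fst.
      exact: continuous_comp fst_cont (pos_repr_continuous y_gt0).
    exact: cvg_snd.
  have t01' : 0 <= t <= 1 by move: t01; rewrite /= in_itv.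
  have pi_toward_cont := continuous_comp (toward_continuous qy t01')
    (@pi_continuous _ {eq_quot (@antip_equiv R r n)} _).
  have := continuous_comp lift_cont pi_toward_cont.
  exact.
- by move=> y _ /=; rewrite toward0 pi_pos_repr.
Qed.

End Charts.

Lemma exists_avoided_value {T : eqType} {r : nat} (a : 'I_r -> T) (i0 : 'I_r)
    {c : 'I_r -> T} :
  injective c -> exists k, forall i, i != i0 -> a i != c k.
Proof.
move=> c_inj; apply/not_existsP => no_k.
have hit k : exists i, (i != i0) && (a i == c k).
  have /existsNP[i /not_implyP[i_neq0 /negP/negPn aic]] := no_k k.
  by exists i; rewrite i_neq0 aic.
have [f f_hit] := choice hit.
have f_inj : injective f.
  move=> k1 k2 f12; apply: c_inj.
  have /andP[_ /eqP <-] := f_hit k1; have /andP[_ /eqP <-] := f_hit k2.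
  by rewrite f12.
have /codomP[k fk] := injF_onto f_inj i0.
by have /andP[] := f_hit k; rewrite -fk eqxx.
Qed.

Section UnitRows.
Context {R : realType}.

Lemma sphere_coord_neq0 m (x : Sphere R m) : exists j, val x ord0 j != 0.
Proof.
apply/not_existsP => x0; have := sqnorm_sphere x.
rewrite /sqnorm big1 => [/esym/eqP|l _]; first by rewrite oner_eq0.
by have /negP/negPn/eqP -> := x0 l; rewrite expr0n.
Qed.

Definition unit_row m (j : nat) : 'rV[R]_m.+1 := \row_l ((l == j :> nat)%:R).

Lemma unit_row_usphere m j : (j <= m)%N -> usphere R m (unit_row m j).
Proof.
move=> j_le; rewrite usphereE /sqnorm (bigD1 (Ordinal (j_le : (j < m.+1)%N))) //= big1.
  by rewrite mxE eqxx expr1n addr0.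
move=> l l_neq; rewrite mxE; suff /negbTE -> : (l : nat) != j by rewrite expr0n.
by apply: contra l_neq => /eqP l_j; apply/eqP/val_inj.
Qed.

Definition slope_row m (c : R) : 'rV[R]_m.+1 :=
  \row_l (if (l : nat) == 0%N then c
          else if (l : nat) == 1%N then Num.sqrt (1 - c ^+ 2) else 0).

Lemma slope_row_usphere m c : (1 <= m)%N -> c ^+ 2 <= 1 -> usphere R m (slope_row m c).
Proof.
case: m => // m _ c_le1; rewrite usphereE /sqnorm !big_ord_recl big1 => [|i _]; last first.
  by rewrite mxE /= expr0n.
by rewrite !mxE /= addr0 sqr_sqrtr ?subr_ge0 // addrC subrK.
Qed.

Definition base_point m : Sphere R m :=
  exist _ (unit_row m 0) (mem_set (unit_row_usphere m 0 (leq0n m))).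

End UnitRows.

Section Cover.
Context {R : realType} {r : nat} {n : nat -> nat}.
Variable r_gt0 : (0 < r)%N.
Hypothesis n_gt0 : forall i, (i < r)%N -> (1 <= n i)%N.
Local Notation PS := (ProdSpheres R r n).

Definition slope (k : 'I_r) : R := k%:R / r%:R.

Lemma slope_inj : injective slope.
Proof.
have r_neq0 : r%:R != 0 :> R by rewrite pnatr_eq0 -lt0n.
by move=> k1 k2 /(mulIf (invr_neq0 r_neq0)) /eqP; rewrite eqr_nat => /eqP /val_inj.
Qed.

Lemma sqr_slope_le1 k : slope k ^+ 2 <= 1.
Proof.
have r_gt0' : 0 < r%:R :> R by rewrite ltr0n.
have slope_ge0 : 0 <= slope k by rewrite divr_ge0.
have slope_le1 : slope k <= 1 by rewrite ler_pdivrMr // mul1r ler_nat ltnW.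
by rewrite expr2 mulr_ile1.
Qed.

(* The [r] distinct slopes ensure that the [r - 1] tail factors of a point cannot
   be antipodal to the tails of all the centers [chart_center j k], [k : 'I_r]. *)
Definition chart_center (j : 'I_(n 0%N).+1) (k : 'I_r) : PS :=
  fun i => insubd (base_point (n i))
    (if (i : nat) == 0%N then unit_row (n i) j else slope_row (n i) (slope k)).

Lemma chart_center_head j k :
  val (chart_center j k (Ordinal r_gt0)) = unit_row (n 0%N) j.
Proof. by rewrite val_insubd /= (mem_set (unit_row_usphere (n 0%N) j (ltn_ord j))). Qed.

Lemma chart_center_tail j k (i : 'I_r) : (i : nat) != 0%N ->
  val (chart_center j k i) = slope_row (n i) (slope k).
Proof.
move=> i_neq0; rewrite val_insubd (negbTE i_neq0).
have n_i_gt0 := n_gt0 _ (ltn_ord i).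
by rewrite (mem_set (slope_row_usphere (n i) (slope k) n_i_gt0 (sqr_slope_le1 k))).
Qed.

Lemma charts_cover y : exists j k, chart r_gt0 j (chart_center j k) y.
Proof.
have [j repr_neq0] := sphere_coord_neq0 _ (repr y (Ordinal r_gt0)).
pose x := pos_repr r_gt0 j y.
have x_gt0 : 0 < head_coord r_gt0 j x := pos_repr_gt0 r_gt0 repr_neq0.
have [k k_avoided] :=
  exists_avoided_value (fun i => - val (x i) ord0 ord0) (Ordinal r_gt0) slope_inj.
exists j, k; split => // i; have [i0|i_neq0] := eqVneq (i : nat) 0%N.
  have -> : i = Ordinal r_gt0 by exact: val_inj.
  apply: (@sqnorm_gt0 _ _ _ j); rewrite chart_center_head !mxE eqxx /=.
  by rewrite gt_eqF // ltr_wpDr ?ler01.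
apply: (@sqnorm_gt0 _ _ _ ord0); rewrite chart_center_tail // !mxE /= addr_eq0.
by have := k_avoided i i_neq0; rewrite eqr_oppLR.
Qed.

End Cover.

Lemma cat_le_of_cover (R : realType) (Y : topologicalType) (I : finType) (k : nat)
    (U : I -> set Y) :
  #|I| = k.+1 -> (forall i, open (U i) /\ contractible_in R Y (U i)) ->
  (forall y, exists i, U i y) -> cat_le R Y k.
Proof.
move=> card_I U_good U_cover.
exists (fun l => U (enum_val (cast_ord (esym card_I) l))).
split => [l|]; first exact: U_good.
apply/seteqP; split => // y _; have [i Uy] := U_cover y.
by exists (cast_ord card_I (enum_rank i)); rewrite // cast_ordK enum_rankK.
Qed.

Theorem mainTheorem13 (R : realType) (r : nat) (n : nat -> nat)
  (hr : (0 < r)%N)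
  (hn_pos : forall i, (i < r)%N -> (1 <= n i)%N)
  (hn_mono : forall i j, (i <= j)%N -> (j < r)%N -> (n i <= n j)%N) :
  cat_lt R (Pn R r n) ((n 0%N).+1 * r)%N.
Proof.
have cover_gt0 : (0 < (n 0%N).+1 * r)%N by rewrite muln_gt0.
exists ((n 0%N).+1 * r).-1; split; first by rewrite prednK.
apply: (@cat_le_of_cover R _ ('I_(n 0%N).+1 * 'I_r)%type _
  (fun jk => chart hr jk.1 (chart_center jk.1 jk.2))).
- by rewrite card_prod !card_ord prednK.
- by move=> jk; split; [exact: chart_open|exact: chart_contractible].
- by move=> y; have [j [k jk_cover]] := charts_cover hr hn_pos y; exists (j, k).
Qed.
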